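(* Under the setting of the single-position greedy algorithm (with $\boldsymbol\epsilon\in[0,1]^V$, rays $R$ with $|R|\ge K$, vectors $\mathbf p_j\in[0,1]^V$, greedy iterates $\mathbf b^t$, $f^t=\sum_i b^t_i$, $E=\sum_i\epsilon_i$, and $\mathrm{OPT}=\min_{S\subseteq R,|S|=K}\sum_i\prod_{j\in S}p_{ij}$), suppose $\mathrm{OPT}>0$ and let $\mathrm{LB}$ be any number with $0<\mathrm{LB}\le \mathrm{OPT}$. Then the approximation ratio $\rho = f^K/\mathrm{OPT}$ satisfies $$\rho \le \frac{E}{\mathrm{LB}\cdot e} + \Big(1-\frac{1}{e}\Big).$$
   Context: Greedy algorithm: $\mathbf b^0=\boldsymbol\epsilon$, $A_0=R$; at iteration $t=1,\dots,K$ choose $j_t\in\arg\min_{j\in A_{t-1}}\sum_i b^{t-1}_i p_{ij}$, set $\mathbf b^t=\mathbf b^{t-1}\odot\mathbf p_{j_t}$ (coordinatewise product), $A_t=A_{t-1}\setminus\{j_t\}$. $e$ is Euler's number. *)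

From Stdlib Require Import Reals List Lia Lra.
Open Scope R_scope.

(* Positions V = {0,..,n-1}, rays R = {0,..,m-1}. *)
Definition rsum (l : list nat) (f : nat -> R) : R :=
  fold_right (fun i acc => f i + acc) 0 l.
Definition rprod (l : list nat) (f : nat -> R) : R :=
  fold_right (fun i acc => f i * acc) 1 l.

Definition bvec (eps : nat -> R) (p : nat -> nat -> R) (S : list nat) (i : nat) : R :=
  eps i * rprod S (fun j => p i j).

Definition fval (n : nat) (eps : nat -> R) (p : nat -> nat -> R) (S : list nat) : R :=
  rsum (seq 0 n) (bvec eps p S).

(* Greedy run: js = [j_1; ...; j_K]; at step t (0-based) the chosen ray j_{t+1}
   is an available ray minimizing sum_i b^t_i p_ij. *)
Definition is_greedy (n m K : nat) (eps : nat -> R) (p : nat -> nat -> R)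
    (js : list nat) : Prop :=
  length js = K /\
  forall t, (t < K)%nat ->
    let pre := firstn t js in
    let jt := nth t js 0%nat in
    (jt < m)%nat /\ ~ In jt pre /\
    forall j, (j < m)%nat -> ~ In j pre ->
      rsum (seq 0 n) (fun i => bvec eps p pre i * p i jt)
        <= rsum (seq 0 n) (fun i => bvec eps p pre i * p i j).

Definition objS (n : nat) (p : nat -> nat -> R) (S : list nat) : R :=
  rsum (seq 0 n) (fun i => rprod S (fun j => p i j)).

Definition ksubset (m K : nat) (S : list nat) : Prop :=
  NoDup S /\ length S = K /\ (forall j, In j S -> (j < m)%nat).

Definition is_OPT (n m K : nat) (p : nat -> nat -> R) (OPT : R) : Prop :=
  (exists S, ksubset m K S /\ objS n p S = OPT) /\
  (forall S, ksubset m K S -> OPT <= objS n p S).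

(* Let S be an optimal K-set and f(T) := sum_i eps_i prod_{j in T} p_ij, so that f^t is f of the
   first t greedy rays and f(S) <= min(OPT, E).  For every T, the loss f(T) - f(S) is at most the
   sum of the marginal gains f(T) - f(T + j) over the at most K rays j of S outside T; the greedy
   ray has the largest gain, so f^t - f(S) shrinks by a factor 1 - 1/K at every step.  Hence
   f^K - f(S) <= (1 - 1/K)^K (E - f(S)) <= (E - f(S))/e, i.e. f^K <= (1 - 1/e) OPT + E/e, and
   dividing by OPT >= LB gives the bound. *)
From Stdlib Require Import Reals List Lia Lra.
Open Scope R_scope.

Lemma rsum_ext l f g : (forall x, In x l -> f x = g x) -> rsum l f = rsum l g.
Proof.
  induction l as [|a l IH]; intros Hfg; simpl; [reflexivity|].
  rewrite Hfg, IH; simpl; auto.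
  intros x Hx; apply Hfg; simpl; auto.
Qed.

Lemma rsum_le l f g : (forall x, In x l -> f x <= g x) -> rsum l f <= rsum l g.
Proof.
  induction l as [|a l IH]; intros Hfg; simpl; [lra|].
  apply Rplus_le_compat; [apply Hfg; simpl; auto|].
  apply IH; intros; apply Hfg; simpl; auto.
Qed.

Lemma rsum_plus l f g : rsum l (fun x => f x + g x) = rsum l f + rsum l g.
Proof. induction l as [|a l IH]; simpl; [lra|]. rewrite IH; ring. Qed.

Lemma rsum_minus l f g : rsum l (fun x => f x - g x) = rsum l f - rsum l g.
Proof. induction l as [|a l IH]; simpl; [lra|]. rewrite IH; ring. Qed.

Lemma rsum_scal l c f : rsum l (fun x => c * f x) = c * rsum l f.
Proof. induction l as [|a l IH]; simpl; [lra|]. rewrite IH; ring. Qed.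

Lemma rsum_const l c : rsum l (fun _ => c) = INR (length l) * c.
Proof.
  induction l as [|a l IH]; simpl length; simpl rsum; [simpl; lra|].
  rewrite IH, S_INR; ring.
Qed.

Lemma rsum_nonneg l f : (forall x, In x l -> 0 <= f x) -> 0 <= rsum l f.
Proof.
  intros Hf. replace 0 with (rsum l (fun _ => 0)) by (rewrite rsum_const; ring).
  now apply rsum_le.
Qed.

Lemma rsum_comm (l1 l2 : list nat) (F : nat -> nat -> R) :
  rsum l1 (fun j => rsum l2 (fun i => F i j)) = rsum l2 (fun i => rsum l1 (fun j => F i j)).
Proof.
  induction l1 as [|a l1 IH]; simpl.
  - rewrite rsum_const; ring.
  - rewrite IH, <- rsum_plus. reflexivity.
Qed.

Lemma rprod_app l1 l2 f : rprod (l1 ++ l2) f = rprod l1 f * rprod l2 f.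
Proof. induction l1 as [|a l1 IH]; simpl; [ring|]. rewrite IH; ring. Qed.

Definition unit_valued (l : list nat) (f : nat -> R) : Prop :=
  forall x, In x l -> 0 <= f x <= 1.

Lemma unit_valued_cons x l f : unit_valued (x :: l) f -> 0 <= f x <= 1 /\ unit_valued l f.
Proof. intros H; split; [apply H | intros y Hy; apply H]; simpl; auto. Qed.

Lemma unit_valued_remove l x f : unit_valued l f -> unit_valued (remove Nat.eq_dec x l) f.
Proof. intros H y Hy. apply in_remove in Hy. apply H; tauto. Qed.

Lemma unit_valued_filter b l f : unit_valued l f -> unit_valued (filter b l) f.
Proof. intros H y Hy. apply filter_In in Hy. apply H; tauto. Qed.

Lemma rprod_unit l f : unit_valued l f -> 0 <= rprod l f <= 1.
Proof.
  induction l as [|a l IH]; intros Hl; simpl; [lra|].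
  apply unit_valued_cons in Hl as [Ha Hl]. specialize (IH Hl).
  split; [apply Rmult_le_pos; lra|].
  rewrite <- (Rmult_1_l 1). apply Rmult_le_compat; lra.
Qed.

Lemma rprod_le_remove l x f : unit_valued l f -> rprod l f <= rprod (remove Nat.eq_dec x l) f.
Proof.
  induction l as [|a l IH]; intros Hl; simpl; [lra|].
  apply unit_valued_cons in Hl as [Ha Hl]. specialize (IH Hl).
  destruct (Nat.eq_dec x a) as [<-|Hxa]; simpl.
  - pose proof (rprod_unit _ _ Hl).
    rewrite <- (Rmult_1_l (rprod (remove Nat.eq_dec x l) f)). apply Rmult_le_compat; lra.
  - apply Rmult_le_compat_l; lra.
Qed.

Lemma rprod_le_mul_remove l x f :
  unit_valued l f -> In x l -> rprod l f <= f x * rprod (remove Nat.eq_dec x l) f.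
Proof.
  induction l as [|a l IH]; intros Hl Hx; [destruct Hx|].
  pose proof (Hl x Hx) as Hfx.
  apply unit_valued_cons in Hl as [Ha Hl]. simpl.
  destruct (Nat.eq_dec x a) as [<-|Hxa].
  - apply Rmult_le_compat_l; [lra|]. now apply rprod_le_remove.
  - destruct Hx as [->|Hx]; [congruence|]. simpl.
    pose proof (rprod_unit _ _ (unit_valued_remove _ x _ Hl)).
    specialize (IH Hl Hx).
    replace (f x * (f a * rprod (remove Nat.eq_dec x l) f))
      with (f a * (f x * rprod (remove Nat.eq_dec x l) f)) by ring.
    apply Rmult_le_compat_l; lra.
Qed.

Definition notinb (l : list nat) (j : nat) : bool :=
  if in_dec Nat.eq_dec j l then false else true.

Lemma notinbP l j : notinb l j = true <-> ~ In j l.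
Proof. unfold notinb. destruct (in_dec Nat.eq_dec j l); split; easy. Qed.

(* A factor of [pre] that also occurs in [S] is matched with its copy in [S]; the remaining
   factors of [pre] are at most 1. *)
Lemma rprod_mul_filter_notin_le S pre f :
  NoDup S -> unit_valued S f -> unit_valued pre f ->
  rprod pre f * rprod (filter (notinb pre) S) f <= rprod S f.
Proof.
  revert pre. induction S as [|x S IH]; intros pre HN HS Hpre; simpl.
  - pose proof (rprod_unit _ _ Hpre). lra.
  - inversion HN as [|? ? HxS HNS]; subst.
    apply unit_valued_cons in HS as [Hx HS].
    destruct (notinb pre x) eqn:Hb; simpl.
    + pose proof (IH pre HNS HS Hpre).
      replace (rprod pre f * (f x * rprod (filter (notinb pre) S) f))
        with (f x * (rprod pre f * rprod (filter (notinb pre) S) f)) by ring.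
      apply Rmult_le_compat_l; lra.
    + assert (Hxpre : In x pre) by (unfold notinb in Hb; destruct (in_dec Nat.eq_dec x pre); easy).
      set (pre' := remove Nat.eq_dec x pre).
      assert (Hfilter : filter (notinb pre) S = filter (notinb pre') S).
      { apply filter_ext_in. intros y Hy.
        assert (y <> x) by (intros ->; contradiction).
        apply Bool.eq_iff_eq_true. rewrite !notinbP. split; intros Hn Hin; apply Hn.
        - now apply in_remove in Hin.
        - now apply in_in_remove. }
      rewrite Hfilter.
      pose proof (rprod_le_mul_remove _ _ _ Hpre Hxpre) as Hpull.
      pose proof (rprod_unit _ _ (unit_valued_filter (notinb pre') _ _ HS)).
      pose proof (IH pre' HNS HS (unit_valued_remove _ _ _ Hpre)).
      apply Rle_trans with (f x * rprod pre' f * rprod (filter (notinb pre') S) f).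
      * apply Rmult_le_compat_r; [lra | exact Hpull].
      * rewrite Rmult_assoc. apply Rmult_le_compat_l; lra.
Qed.

Lemma one_sub_rprod_le l f : unit_valued l f -> 1 - rprod l f <= rsum l (fun j => 1 - f j).
Proof.
  induction l as [|a l IH]; intros Hl; simpl; [lra|].
  apply unit_valued_cons in Hl as [Ha Hl]. specialize (IH Hl).
  pose proof (rprod_unit _ _ Hl).
  assert (0 <= (1 - f a) * (1 - rprod l f)) by (apply Rmult_le_pos; lra). nra.
Qed.

Lemma firstn_S_nth (l : list nat) t : (t < length l)%nat ->
  firstn (S t) l = firstn t l ++ nth t l 0%nat :: nil.
Proof.
  revert t; induction l as [|a l IH]; intros t Ht; simpl in Ht; [lia|].
  destruct t; [reflexivity|].
  rewrite firstn_cons, IH by lia. reflexivity.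
Qed.

Lemma In_firstn (l : list nat) t x : In x (firstn t l) -> In x l.
Proof. intros H. rewrite <- (firstn_skipn t l). apply in_or_app; auto. Qed.

Lemma exp_pow x k : exp x ^ k = exp (INR k * x).
Proof.
  induction k as [|k IH]; simpl pow.
  - rewrite Rmult_0_l, exp_0; ring.
  - rewrite IH, <- exp_plus, S_INR. f_equal; ring.
Qed.

Lemma Rinv_INR_le_1 (k : nat) : (0 < k)%nat -> / INR k <= 1.
Proof.
  intros Hk. assert (1 <= INR k) by (apply (le_INR 1); lia).
  rewrite <- Rinv_1. apply Rinv_le_contravar; lra.
Qed.

Lemma pow_one_sub_inv_le_inv_exp (k : nat) : (0 < k)%nat -> (1 - / INR k) ^ k <= / exp 1.
Proof.
  intros Hk. pose proof (Rinv_INR_le_1 k Hk).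
  assert (0 < INR k) by (apply lt_0_INR; lia).
  apply Rle_trans with (exp (- / INR k) ^ k).
  - apply pow_incr. pose proof (exp_ineq1_le (- / INR k)). lra.
  - rewrite exp_pow, <- exp_Ropp. right. f_equal. field. lra.
Qed.

(* The recurrence K a_{t+1} <= (K - 1) a_t + g says a_{t+1} - g <= (1 - 1/K) (a_t - g). *)
Lemma recurrence_le_inv_exp (K : nat) (a : nat -> R) (g : R) :
  (0 < K)%nat -> g <= a 0%nat ->
  (forall t, (t < K)%nat -> INR K * a (S t) <= (INR K - 1) * a t + g) ->
  a K <= g + / exp 1 * (a 0%nat - g).
Proof.
  intros HK Hg Hrec.
  set (q := 1 - / INR K).
  assert (HKR : 0 < INR K) by (apply lt_0_INR; lia).
  assert (Hq : 0 <= q) by (pose proof (Rinv_INR_le_1 K HK); unfold q; lra).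
  assert (Hcontract : forall t, (t < K)%nat -> a (S t) - g <= q * (a t - g)).
  { intros t Ht. specialize (Hrec t Ht).
    apply Rmult_le_reg_l with (INR K); [lra|].
    replace (INR K * (q * (a t - g))) with ((INR K - 1) * (a t - g)) by (unfold q; field; lra).
    lra. }
  assert (Hiter : forall t, (t <= K)%nat -> a t - g <= q ^ t * (a 0%nat - g)).
  { induction t as [|t IH]; intros Ht; simpl; [lra|].
    rewrite Rmult_assoc. apply Rle_trans with (q * (a t - g)); [apply Hcontract; lia|].
    apply Rmult_le_compat_l; [lra|]. apply IH; lia. }
  pose proof (Hiter K (le_n K)).
  pose proof (pow_one_sub_inv_le_inv_exp K HK) as Hpow. fold q in Hpow.
  assert (q ^ K * (a 0%nat - g) <= / exp 1 * (a 0%nat - g)) by (apply Rmult_le_compat_r; lra).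
  lra.
Qed.

Section Greedy.

Variables (n m : nat) (eps : nat -> R) (p : nat -> nat -> R).
Hypothesis eps_unit : forall i, (i < n)%nat -> 0 <= eps i <= 1.
Hypothesis p_unit : forall i j, (i < n)%nat -> (j < m)%nat -> 0 <= p i j <= 1.

Definition rays (S : list nat) : Prop := forall j, In j S -> (j < m)%nat.

Lemma ksubset_rays K S : ksubset m K S -> rays S.
Proof. intros [_ [_ HS]]. exact HS. Qed.

Lemma rays_unit_valued i S : (i < n)%nat -> rays S -> unit_valued S (fun j => p i j).
Proof. intros Hi HS j Hj. apply p_unit; auto. Qed.

Lemma In_positions i : In i (seq 0 n) -> (i < n)%nat.
Proof. intros Hi. apply in_seq in Hi. lia. Qed.

Lemma bvec_bounds S i : rays S -> (i < n)%nat -> 0 <= bvec eps p S i <= eps i.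
Proof.
  intros HS Hi. unfold bvec.
  pose proof (rprod_unit _ _ (rays_unit_valued i S Hi HS)). pose proof (eps_unit i Hi).
  split; [apply Rmult_le_pos; lra|].
  rewrite <- (Rmult_1_r (eps i)) at 2. apply Rmult_le_compat_l; lra.
Qed.

Lemma fval_nil : fval n eps p nil = rsum (seq 0 n) eps.
Proof. apply rsum_ext. intros i _. unfold bvec; simpl; ring. Qed.

Lemma fval_snoc S j :
  fval n eps p (S ++ j :: nil) = rsum (seq 0 n) (fun i => bvec eps p S i * p i j).
Proof. apply rsum_ext. intros i _. unfold bvec. rewrite rprod_app; simpl; ring. Qed.

Lemma fval_sub_snoc S j :
  fval n eps p S - fval n eps p (S ++ j :: nil)
  = rsum (seq 0 n) (fun i => bvec eps p S i * (1 - p i j)).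
Proof. rewrite fval_snoc. unfold fval. rewrite <- rsum_minus. apply rsum_ext; intros; ring. Qed.

Lemma fval_le_eps_sum S : rays S -> fval n eps p S <= rsum (seq 0 n) eps.
Proof. intros HS. apply rsum_le. intros i Hi. apply bvec_bounds; auto. now apply In_positions. Qed.

Lemma fval_le_objS S : rays S -> fval n eps p S <= objS n p S.
Proof.
  intros HS. apply rsum_le. intros i Hi. apply In_positions in Hi. unfold bvec.
  pose proof (rprod_unit _ _ (rays_unit_valued i S Hi HS)). pose proof (eps_unit i Hi).
  rewrite <- (Rmult_1_l (rprod S _)) at 2. apply Rmult_le_compat_r; lra.
Qed.

Lemma fval_snoc_le S j : rays S -> (j < m)%nat -> fval n eps p (S ++ j :: nil) <= fval n eps p S.
Proof.
  intros HS Hj. enough (0 <= fval n eps p S - fval n eps p (S ++ j :: nil)) by lra.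
  rewrite fval_sub_snoc. apply rsum_nonneg. intros i Hi. apply In_positions in Hi.
  pose proof (bvec_bounds S i HS Hi). pose proof (p_unit i j Hi Hj).
  apply Rmult_le_pos; lra.
Qed.

(* At position i, with S' the rays of S outside T:
   b_i - eps_i prod_S p <= b_i (1 - prod_S' p) <= b_i sum_S' (1 - p). *)
Lemma fval_loss_le_gains T S : rays T -> rays S -> NoDup S ->
  fval n eps p T - fval n eps p S
  <= rsum (filter (notinb T) S) (fun j => fval n eps p T - fval n eps p (T ++ j :: nil)).
Proof.
  intros HT HS HN. set (S' := filter (notinb T) S).
  rewrite (rsum_ext S' _ (fun j => rsum (seq 0 n) (fun i => bvec eps p T i * (1 - p i j))))
    by (intros; apply fval_sub_snoc).
  rewrite rsum_comm. unfold fval. rewrite <- rsum_minus. apply rsum_le.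
  intros i Hi. apply In_positions in Hi. rewrite rsum_scal.
  assert (HS' : unit_valued S' (fun j => p i j))
    by (apply unit_valued_filter, rays_unit_valued; auto).
  pose proof (bvec_bounds T i HT Hi).
  pose proof (one_sub_rprod_le _ _ HS').
  pose proof (rprod_mul_filter_notin_le S T (fun j => p i j) HN
    (rays_unit_valued i S Hi HS) (rays_unit_valued i T Hi HT)) as Hprod.
  fold S' in Hprod. pose proof (eps_unit i Hi).
  assert (bvec eps p T i * rprod S' (fun j => p i j) <= bvec eps p S i).
  { unfold bvec. rewrite Rmult_assoc. apply Rmult_le_compat_l; lra. }
  assert (bvec eps p T i * (1 - rprod S' (fun j => p i j))
          <= bvec eps p T i * rsum S' (fun j => 1 - p i j)) by (apply Rmult_le_compat_l; lra).
  lra.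
Qed.

Lemma greedy_step K T jt S :
  rays T -> (jt < m)%nat ->
  (forall j, (j < m)%nat -> ~ In j T -> fval n eps p (T ++ jt :: nil) <= fval n eps p (T ++ j :: nil)) ->
  ksubset m K S ->
  INR K * fval n eps p (T ++ jt :: nil) <= (INR K - 1) * fval n eps p T + fval n eps p S.
Proof.
  intros HT Hjt Hmin [HN [HK HS]].
  set (gain := fun j => fval n eps p T - fval n eps p (T ++ j :: nil)).
  set (S' := filter (notinb T) S).
  pose proof (fval_loss_le_gains T S HT HS HN) as Hloss. fold S' in Hloss.
  assert (Hgains : rsum S' gain <= rsum S' (fun _ => gain jt)).
  { apply rsum_le. intros j Hj. apply filter_In in Hj as [HjS HjT].
    apply notinbP in HjT. unfold gain. pose proof (Hmin j (HS j HjS) HjT). lra. }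
  rewrite rsum_const in Hgains.
  assert (INR (length S') * gain jt <= INR K * gain jt).
  { apply Rmult_le_compat_r.
    - unfold gain. pose proof (fval_snoc_le T jt HT Hjt). lra.
    - apply le_INR. rewrite <- HK. apply filter_length_le. }
  unfold gain in *. lra.
Qed.

Lemma greedy_rays K js : is_greedy n m K eps p js -> rays js.
Proof.
  intros [Hlen Hgr] x Hx. destruct (In_nth js x 0%nat Hx) as [t [Ht <-]].
  rewrite Hlen in Ht. now destruct (Hgr t Ht).
Qed.

Lemma greedy_prefix_step K js Sopt t :
  is_greedy n m K eps p js -> ksubset m K Sopt -> (t < K)%nat ->
  INR K * fval n eps p (firstn (S t) js)
  <= (INR K - 1) * fval n eps p (firstn t js) + fval n eps p Sopt.
Proof.
  intros Hg HS Ht. pose proof (greedy_rays K js Hg) as Hjs.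
  destruct Hg as [Hlen Hgr]. destruct (Hgr t Ht) as [Hjt [_ Hmin]].
  rewrite firstn_S_nth by lia.
  apply greedy_step; auto.
  - intros x Hx. apply Hjs. eapply In_firstn; eauto.
  - intros j Hj Hnin. rewrite !fval_snoc. now apply Hmin.
Qed.

Lemma greedy_value_bound K js Sopt :
  is_greedy n m K eps p js -> ksubset m K Sopt ->
  fval n eps p js
  <= fval n eps p Sopt + / exp 1 * (rsum (seq 0 n) eps - fval n eps p Sopt).
Proof.
  intros Hg HS. destruct K as [|K].
  - destruct Hg as [Hlen _]. destruct HS as [_ [HSl _]].
    destruct js, Sopt; try discriminate. rewrite fval_nil; lra.
  - rewrite <- (firstn_all js), (proj1 Hg), <- fval_nil.
    apply (recurrence_le_inv_exp (S K) (fun t => fval n eps p (firstn t js))); [lia| |].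
    + change (fval n eps p Sopt <= fval n eps p nil). rewrite fval_nil.
      apply fval_le_eps_sum, (ksubset_rays _ _ HS).
    + intros t Ht. now apply greedy_prefix_step.
Qed.

End Greedy.

Lemma ratio_le_of_affine_bound (F OPT LB E c : R) :
  0 < c -> 0 <= E -> 0 < LB -> LB <= OPT ->
  F <= (1 - c) * OPT + c * E -> F / OPT <= c * E / LB + (1 - c).
Proof.
  intros Hc HE HLB HLBO HF.
  apply Rle_trans with (c * E / OPT + (1 - c)).
  - apply Rmult_le_reg_r with OPT; [lra|].
    replace ((c * E / OPT + (1 - c)) * OPT) with ((1 - c) * OPT + c * E) by (field; lra).
    replace (F / OPT * OPT) with F by (field; lra). exact HF.
  - apply Rplus_le_compat_r. unfold Rdiv. apply Rmult_le_compat_l; [nra|].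
    apply Rinv_le_contravar; lra.
Qed.

Theorem mainTheorem3 (n m K : nat) (eps : nat -> R) (p : nat -> nat -> R)
    (js : list nat) (OPT LB : R) :
  (forall i, (i < n)%nat -> 0 <= eps i <= 1) ->
  (forall i j, (i < n)%nat -> (j < m)%nat -> 0 <= p i j <= 1) ->
  (K <= m)%nat ->
  is_greedy n m K eps p js ->
  is_OPT n m K p OPT ->
  0 < OPT -> 0 < LB -> LB <= OPT ->
  fval n eps p js / OPT
    <= rsum (seq 0 n) eps / (LB * exp 1) + (1 - 1 / exp 1).
Proof.
  intros Heps Hp _ Hg [[Sopt [HS HSopt]] _] HOPT HLB HLBO.
  pose proof (greedy_value_bound n m eps p Heps Hp K js Sopt Hg HS) as Hf.
  pose proof (fval_le_objS n m eps p Heps Hp Sopt (ksubset_rays m K Sopt HS)) as Hopt.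
  rewrite HSopt in Hopt.
  set (E := rsum (seq 0 n) eps) in *.
  set (c := / exp 1) in *.
  assert (HE : 0 <= E) by (apply rsum_nonneg; intros i Hi; apply Heps, In_positions, Hi).
  assert (Hc : 0 < c < 1).
  { pose proof (exp_ineq1 1 ltac:(lra)). unfold c. split.
    - apply Rinv_0_lt_compat; lra.
    - apply Rmult_lt_reg_r with (exp 1); [lra|]. rewrite Rinv_l; lra. }
  replace (E / (LB * exp 1) + (1 - 1 / exp 1)) with (c * E / LB + (1 - c))
    by (unfold c; field; split; apply Rgt_not_eq; [apply exp_pos | lra]).
  apply ratio_le_of_affine_bound; try lra.
  pose proof (Rmult_le_compat_l (1 - c) _ _ ltac:(lra) Hopt). lra.
Qed.
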